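(* Let $k\ge1$ be an integer, $a,b,c,d\ge0$, $\eta\in\mathbb{R}$, and let $(u_n,v_n)$ be any $(PS)_\eta$-sequence of $I$. Then $(u_n,v_n)$ is bounded in $H^1(\mathbb{R})\times H^1(\mathbb{R})$, and (i) $\|(u_n,v_n)\|_{H^1\times H^1}^2\to\frac{2k+2}{k}\eta$; (ii) $P(u_n,v_n)\to\frac{\eta}{k}$. In particular $\eta\ge0$, and $\eta=0$ if and only if $u_n\to0$ and $v_n\to0$ in $H^1(\mathbb{R})$.
   Context: $H(u,v)=\frac{a}{2k+2}(u^{2k+2}+v^{2k+2})+\frac{b}{k+1}(uv)^{k+1}+\frac{c}{k}u^{k+2}v^k+\frac{d}{k}u^kv^{k+2}$; $P(u,v)=\int H(u,v)dx$; $\|(u,v)\|_{H^1\times H^1}^2=\int(u^2+v^2+u'^2+v'^2)dx$; $I(u,v)=\frac12\|(u,v)\|_{H^1\times H^1}^2-P(u,v)$. A $(PS)_\eta$-sequence of $I$ is a sequence $(u_n,v_n)\subset H^1\times H^1$ with $I(u_n,v_n)\to\eta$ and $I'(u_n,v_n)\to0$ in $H^{-1}\times H^{-1}$. *)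

From HB Require Import structures.
From mathcomp Require Import all_boot all_order all_algebra.
From mathcomp Require Import all_classical all_reals all_analysis.
Set Implicit Arguments. Unset Strict Implicit. Unset Printing Implicit Defensive.
Import Order.TTheory GRing.Theory Num.Theory.
Import numFieldNormedType.Exports.
Local Open Scope classical_set_scope.
Local Open Scope ring_scope.

Section Defs.
Context {R : realType}.
Local Notation mu := (@lebesgue_measure R).

Definition L2 (f : R -> R) : Prop :=
  measurable_fun setT f /\ (\int[mu]_x ((f x ^+ 2)%:E) < +oo)%E.

Definition test_fun (phi : R -> R) : Prop :=
  (forall (n : nat) (x : R), derivable (iter n (@derive1 R R) phi) x 1)
  /\ exists M : R, forall x, M < `|x| -> phi x = 0.

Definition weak_deriv (u w : R -> R) : Prop :=
  forall phi, test_fun phi ->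
    Rintegral mu setT (fun x : R => u x * derive1 phi x)
    = - Rintegral mu setT (fun x : R => w x * phi x).

Definition H1 (u u' : R -> R) : Prop := L2 u /\ L2 u' /\ weak_deriv u u'.

Definition H1norm2 (u u' : R -> R) : R :=
  Rintegral mu setT (fun x : R => u x ^+ 2 + u' x ^+ 2).

Definition H1H1norm2 (u u' v v' : R -> R) : R :=
  Rintegral mu setT (fun x : R => u x ^+ 2 + v x ^+ 2 + u' x ^+ 2 + v' x ^+ 2).

Definition H_func (k : nat) (a b c d : R) (u v : R) : R :=
  a / (2 * k + 2)%N%:R * (u ^+ (2 * k + 2)%N + v ^+ (2 * k + 2)%N)
  + b / k.+1%:R * (u * v) ^+ k.+1
  + c / k%:R * (u ^+ (k + 2)%N * v ^+ k)
  + d / k%:R * (u ^+ k * v ^+ (k + 2)%N).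

Definition P_func (k : nat) (a b c d : R) (u v : R -> R) : R :=
  Rintegral mu setT (fun x : R => H_func k a b c d (u x) (v x)).

Definition I_func (k : nat) (a b c d : R) (u u' v v' : R -> R) : R :=
  2^-1 * H1H1norm2 u u' v v' - P_func k a b c d u v.

(* (PS)_eta sequence: I(u_n,v_n) -> eta and I'(u_n,v_n) -> 0 in H^{-1} x H^{-1};
   I'(u,v) is evaluated on a direction (phi,psi) as the derivative at t = 0
   of t |-> I(u + t phi, v + t psi) (I is C^1, so this is its Frechet derivative),
   and the dual norm of I'(u_n,v_n) is bounded by eps n -> 0. *)
Definition PSseq (k : nat) (a b c d eta : R) (U U' V V' : nat -> R -> R) : Prop :=
  (forall n, H1 (U n) (U' n) /\ H1 (V n) (V' n))
  /\ ((fun n => I_func k a b c d (U n) (U' n) (V n) (V' n)) @ \oo --> eta)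
  /\ exists eps : nat -> R, (eps @ \oo --> 0) /\
     forall n (phi phi' psi psi' : R -> R), H1 phi phi' -> H1 psi psi' ->
       let g := fun t : R => I_func k a b c d
                  (fun x : R => U n x + t * phi x) (fun x : R => U' n x + t * phi' x)
                  (fun x : R => V n x + t * psi x) (fun x : R => V' n x + t * psi' x) in
       derivable g 0 1 /\
       `| derive1 g 0 | <= eps n * Num.sqrt (H1H1norm2 phi phi' psi psi').

End Defs.

From HB Require Import structures.
From mathcomp Require Import all_boot all_order all_algebra.
From mathcomp Require Import all_classical all_reals all_analysis.
From mathcomp Require Import zify ring lra.
Import Order.TTheory GRing.Theory Num.Theory.
Import numFieldNormedType.Exports.
Local Open Scope classical_set_scope.
Local Open Scope ring_scope.

(* H is homogeneous of degree 2k+2, so along the ray t |-> (1+t)(u_n, v_n)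
   the functional is (1+t)^2 N_n / 2 - (1+t)^(2k+2) P_n, where N_n is the
   squared norm and P_n = P(u_n, v_n).  Testing I'(u_n, v_n) in the direction
   (u_n, v_n) therefore gives the Nehari defect N_n - (2k+2) P_n, which is
   o(sqrt N_n).  Together with N_n / 2 - P_n -> eta this yields
   k N_n = (2k+2) I(u_n, v_n) - o(sqrt N_n): the norms are bounded, the
   defect tends to 0, and the limits of N_n and P_n follow by linear algebra. *)

Section Rintegral_scaling.
Context {d} {T : measurableType d} {R : realType} (mu : {measure set T -> \bar R}).

(* Without integrability both sides are [fine] of a non-finite integral, i.e. 0. *)
Lemma measurable_RintegralZl (D : set T) (f : T -> R) (r : R) :
  measurable D -> measurable_fun D f ->
  Rintegral mu D (fun x => r * f x) = r * Rintegral mu D f.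
Proof.
move=> mD mf; have [->|r0] := eqVneq r 0.
  by under eq_Rintegral do rewrite mul0r; rewrite Rintegral_cst // !mul0r.
have [fint|fNint] := boolP (mu.-integrable D (EFin \o f)); first exact: RintegralZl.
have mrf : measurable_fun D (fun x => r * f x).
  exact: measurable_realfun.measurable_funM (measurable_cst r) mf.
have rfNint : ~~ mu.-integrable D (EFin \o (fun x => r * f x)).
  apply: contra fNint => /(integrableZl mD r^-1); congr (_.-integrable _ _).
  by apply/funext => x /=; rewrite -EFinM mulrA mulVf // mul1r.
have integral_finN g : measurable_fun D g -> ~~ mu.-integrable D (EFin \o g) ->
    (\int[mu]_(x in D) (g x)%:E)%E \isn't a fin_num.
  move=> mg; apply: contra => gfin; apply/integrableP; split.
    exact/measurable_realfun.measurable_EFinP.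
  by rewrite integral_fin_num_abs.
have fine_notfin (x : \bar R) : x \isn't a fin_num -> fine x = 0 by case: x.
rewrite /Rintegral (fine_notfin _ (integral_finN _ mrf rfNint)).
by rewrite (fine_notfin _ (integral_finN _ mf fNint)) mulr0.
Qed.

End Rintegral_scaling.

Section Nehari_sequences.
Context {R : realType}.

Lemma le_of_sqr_le_affine (s A B : R) : 0 <= s -> 0 <= A -> 0 <= B ->
  s ^+ 2 <= A + B * s -> s <= 1 + A + B.
Proof.
move=> s_ge0 A_ge0 B_ge0 hs; have [s_le1|s_gt1] := lerP s 1; first lra.
have : s * s <= (A + B) * s.
  by rewrite -expr2 mulrDl; apply: le_trans hs _; rewrite lerD2r ler_peMr // ltW.
by rewrite ler_pM2r; lra.
Qed.

Lemma cvg_seq_norm_bounded {f : nat -> R} :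
  cvgn f -> exists M : R, forall n, `|f n| <= M.
Proof.
move=> /cvg_seq_bounded [M [_ hM]].
by exists (M + 1) => n; apply: (hM (M + 1)); rewrite ?ltrDl.
Qed.

Lemma cvg0_sqrtD (x y : nat -> R) : (forall n, 0 <= x n) -> (forall n, 0 <= y n) ->
  (fun n => x n + y n) @ \oo --> 0 <->
  (fun n => Num.sqrt (x n)) @ \oo --> 0 /\ (fun n => Num.sqrt (y n)) @ \oo --> 0.
Proof.
move=> x_ge0 y_ge0; split.
- move=> xy0; have sxy0 : (fun n => Num.sqrt (x n + y n)) @ \oo --> 0.
    by rewrite -sqrtr0; apply: continuous_cvg => //; exact: sqrt_continuous.
  split; apply: (squeeze_cvgr _ (cvg_cst 0) sxy0); apply: nearW => n;
    by rewrite sqrtr_ge0 ler_wsqrtr // ?lerDl ?lerDr.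
- case=> sx0 sy0; have -> : (fun n => x n + y n) =
      (fun n => Num.sqrt (x n) * Num.sqrt (x n) + Num.sqrt (y n) * Num.sqrt (y n)).
    by apply/funext => n; rewrite -!expr2 !sqr_sqrtr.
  by have := cvgD (cvgM sx0 sx0) (cvgM sy0 sy0); rewrite mulr0 addr0; apply.
Qed.

Context {k eta : R} {N P eps : nat -> R}.
Hypotheses (k_gt0 : 0 < k) (N_ge0 : forall n, 0 <= N n)
  (I_cvg : (fun n => 2^-1 * N n - P n) @ \oo --> eta)
  (eps_cvg0 : eps @ \oo --> 0)
  (Nehari_defect : forall n, `|N n - (2 * k + 2) * P n| <= eps n * Num.sqrt (N n)).

Let k2_gt0 : 0 < 2 * k + 2.
Proof. by move: k_gt0; lra. Qed.

Let I n := 2^-1 * N n - P n.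
Let D n := N n - (2 * k + 2) * P n.

Let kN n : k * N n = (2 * k + 2) * I n - D n.
Proof. by rewrite /I /D; field. Qed.

Lemma Nehari_sqrt_bounded : exists C : R, forall n, Num.sqrt (N n) <= C.
Proof.
have [A hA] := cvg_seq_norm_bounded (cvgP _ I_cvg).
have [B hB] := cvg_seq_norm_bounded (cvgP _ eps_cvg0).
have A_ge0 : 0 <= A := le_trans (normr_ge0 _) (hA 0%N).
have B_ge0 : 0 <= B := le_trans (normr_ge0 _) (hB 0%N).
exists (1 + (2 * k + 2) / k * A + B / k) => n.
have s_ge0 := sqrtr_ge0 (N n).
apply: le_of_sqr_le_affine => //.
- by rewrite mulr_ge0 // divr_ge0 // ltW.
- by rewrite divr_ge0 // ltW.
have IA : (2 * k + 2) * I n <= (2 * k + 2) * A.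
  by rewrite ler_pM2l // (le_trans (ler_norm _) (hA n)).
have DB : - D n <= B * Num.sqrt (N n).
  apply: le_trans (ler_norm _) _; rewrite normrN; apply: le_trans (Nehari_defect n) _.
  by rewrite ler_wpM2r // (le_trans (ler_norm _) (hB n)).
rewrite sqr_sqrtr // -{1}[N n](mulKf (lt0r_neq0 k_gt0)) kN.
have -> : (2 * k + 2) / k * A + B / k * Num.sqrt (N n) =
    k^-1 * ((2 * k + 2) * A + B * Num.sqrt (N n)) by ring.
by apply: ler_wpM2l; [rewrite invr_ge0 ltW | exact: lerD IA DB].
Qed.

Lemma Nehari_defect_cvg0 : (fun n => N n - (2 * k + 2) * P n) @ \oo --> 0.
Proof.
have [C hC] := Nehari_sqrt_bounded.
have epsC0 : (fun n => `|eps n| * C) @ \oo --> 0.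
  by have := cvgM (cvg_norm eps_cvg0) (cvg_cst C); rewrite normr0 mul0r; apply.
have epsCN0 : (fun n => - (`|eps n| * C)) @ \oo --> 0.
  by rewrite -oppr0; exact: cvgN epsC0.
apply: (squeeze_cvgr _ epsCN0 epsC0).
apply: nearW => n; rewrite -ler_norml (le_trans (Nehari_defect n)) //.
rewrite (le_trans (ler_wpM2r (sqrtr_ge0 _) (ler_norm (eps n)))) //.
by rewrite ler_wpM2l.
Qed.

Lemma Nehari_norm_cvg : N @ \oo --> (2 * k + 2) / k * eta.
Proof.
have -> : N = fun n => k^-1 * ((2 * k + 2) * I n - D n).
  by apply/funext => n; rewrite -kN mulKf // lt0r_neq0.
have -> : (2 * k + 2) / k * eta = k^-1 * ((2 * k + 2) * eta - 0) by ring.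
exact: cvgM (cvg_cst _) (cvgB (cvgM (cvg_cst _) I_cvg) Nehari_defect_cvg0).
Qed.

Lemma Nehari_P_cvg : P @ \oo --> eta / k.
Proof.
have -> : P = fun n => 2^-1 * N n - I n by apply/funext => n; rewrite /I; ring.
have -> : eta / k = 2^-1 * ((2 * k + 2) / k * eta) - eta.
  by field; rewrite lt0r_neq0.
exact: cvgB (cvgM (cvg_cst _) Nehari_norm_cvg) I_cvg.
Qed.

Lemma Nehari_level_ge0 : 0 <= eta.
Proof.
have : 0 <= (2 * k + 2) / k * eta.
  by apply: (cvgr_to_ge Nehari_norm_cvg); exact: nearW.
by rewrite pmulr_rge0 // divr_gt0.
Qed.

Lemma Nehari_level_eq0 : eta = 0 <-> N @ \oo --> 0.
Proof.
split=> [eta0|N0]; first by have := Nehari_norm_cvg; rewrite eta0 mulr0.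
have Kk : (2 * k + 2) / k != 0.
  by rewrite mulf_neq0 ?invr_eq0 ?lt0r_neq0.
apply: (mulfI Kk); rewrite mulr0; exact: cvg_unique _ Nehari_norm_cvg N0.
Qed.

End Nehari_sequences.

Lemma derive1_ray_profile {R : realType} (N P : R) (m : nat) :
  derive1 (fun t : R => 2^-1 * ((1 + t) ^+ 2 * N) - (1 + t) ^+ m * P) 0
  = N - m%:R * P.
Proof.
pose r : R -> R := cst 1 + id.
have dr : is_derive (0 : R) 1 r (0 + 1).
  exact: is_deriveD (is_derive_cst _ _ _) (is_derive_id _ _).
have D := is_deriveB (is_deriveZ (2^-1 * N) (is_deriveX 2 dr))
                     (is_deriveZ P (is_deriveX m dr)).
have -> : (fun t : R => 2^-1 * ((1 + t) ^+ 2 * N) - (1 + t) ^+ m * P)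
    = (2^-1 * N) \*: r ^+ 2 - P \*: r ^+ m.
  by apply/funext => t; rewrite !fctE /= /GRing.scale /= /r !fctE /=; ring.
rewrite derive1E (@derive_val _ _ _ _ _ _ _ D) /GRing.scale /= /r !fctE /=.
by rewrite !addr0 add0r !expr1n; field.
Qed.

Section energy_functional.
Context {R : realType}.
Local Notation mu := (@lebesgue_measure R).
Variables (k : nat) (a b c d : R).

Lemma H_funcZ (l u v : R) :
  H_func k a b c d (l * u) (l * v) = l ^+ (2 * k + 2) * H_func k a b c d u v.
Proof.
have e1 : (l * u * (l * v)) ^+ k.+1 = l ^+ (2 * k + 2) * (u * v) ^+ k.+1.
  by rewrite mulrACA exprMn -expr2 -exprM; congr (_ ^+ _ * _); lia.
have e2 : (l * u) ^+ (k + 2) * (l * v) ^+ k = l ^+ (2 * k + 2) * (u ^+ (k + 2) * v ^+ k).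
  by rewrite !exprMn mulrACA -exprD; congr (_ ^+ _ * _); lia.
have e3 : (l * u) ^+ k * (l * v) ^+ (k + 2) = l ^+ (2 * k + 2) * (u ^+ k * v ^+ (k + 2)).
  by rewrite !exprMn mulrACA -exprD; congr (_ ^+ _ * _); lia.
rewrite /H_func e1 e2 e3 !exprMn; ring.
Qed.

Lemma measurable_H_func {u v : R -> R} :
  measurable_fun setT u -> measurable_fun setT v ->
  measurable_fun setT (fun x => H_func k a b c d (u x) (v x)).
Proof.
move=> mu_ mv; rewrite /H_func.
by repeat first [ apply: measurable_realfun.measurable_funD
                | apply: measurable_realfun.measurable_funM
                | apply: measurable_realfun.measurable_funX
                | exact: measurable_cst ].
Qed.

Lemma I_func_ray (u u' v v' : R -> R) (t : R) :
  measurable_fun setT u -> measurable_fun setT u' ->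
  measurable_fun setT v -> measurable_fun setT v' ->
  I_func k a b c d (fun x => u x + t * u x) (fun x => u' x + t * u' x)
    (fun x => v x + t * v x) (fun x => v' x + t * v' x)
  = 2^-1 * ((1 + t) ^+ 2 * H1H1norm2 u u' v v')
    - (1 + t) ^+ (2 * k + 2) * P_func k a b c d u v.
Proof.
move=> mu_ mu' mv mv'.
have mN : measurable_fun setT (fun x => u x ^+ 2 + v x ^+ 2 + u' x ^+ 2 + v' x ^+ 2).
  by repeat first [ apply: measurable_realfun.measurable_funD
                  | apply: measurable_realfun.measurable_funX ].
rewrite /I_func /H1H1norm2 /P_func.
rewrite -(measurable_RintegralZl mu _ _ ((1 + t) ^+ 2) measurableT mN).
rewrite -(measurable_RintegralZl mu _ _ ((1 + t) ^+ (2 * k + 2)) measurableT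
            (measurable_H_func mu_ mv)).
congr (_ * _ - _); apply: eq_Rintegral => x _; first by ring.
by rewrite -H_funcZ; congr H_func; ring.
Qed.

Lemma derive1_I_func_ray (u u' v v' : R -> R) :
  measurable_fun setT u -> measurable_fun setT u' ->
  measurable_fun setT v -> measurable_fun setT v' ->
  derive1 (fun t : R => I_func k a b c d (fun x => u x + t * u x)
     (fun x => u' x + t * u' x) (fun x => v x + t * v x)
     (fun x => v' x + t * v' x)) 0
  = H1H1norm2 u u' v v' - (2 * k%:R + 2) * P_func k a b c d u v.
Proof.
move=> mu_ mu' mv mv'.
under eq_fun do rewrite I_func_ray //.
by rewrite derive1_ray_profile natrD natrM.
Qed.

End energy_functional.

Section H1_norms.
Context {R : realType}.
Local Notation mu := (@lebesgue_measure R).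

Lemma L2_integrable_sqr (u : R -> R) :
  L2 u -> mu.-integrable setT (EFin \o (fun x => u x ^+ 2)).
Proof.
case=> mu_ fin; apply/integrableP; split.
  by apply/measurable_realfun.measurable_EFinP; exact: measurable_realfun.measurable_funX.
by under eq_integral => x _ do rewrite /= ger0_norm ?sqr_ge0 //.
Qed.

Lemma H1_integrable (u u' : R -> R) : H1 u u' ->
  mu.-integrable setT (EFin \o (fun x => u x ^+ 2 + u' x ^+ 2)).
Proof.
case=> /L2_integrable_sqr iu [/L2_integrable_sqr iu' _].
by have := integrableD measurableT iu iu'; congr (_.-integrable _ _).
Qed.

Lemma H1H1norm2_split (u u' v v' : R -> R) : H1 u u' -> H1 v v' ->
  H1H1norm2 u u' v v' = H1norm2 u u' + H1norm2 v v'.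
Proof.
move=> /H1_integrable iu /H1_integrable iv.
rewrite /H1H1norm2 /H1norm2 -RintegralD //.
by apply: eq_Rintegral => x _; ring.
Qed.

Lemma H1norm2_ge0 (u u' : R -> R) : 0 <= H1norm2 u u'.
Proof. by apply: Rintegral_ge0 => x _; rewrite addr_ge0 ?sqr_ge0. Qed.

Lemma H1H1norm2_ge0 (u u' v v' : R -> R) : 0 <= H1H1norm2 u u' v v'.
Proof. by apply: Rintegral_ge0 => x _; rewrite !addr_ge0 ?sqr_ge0. Qed.

End H1_norms.

Theorem proposition3p8 (R : realType) (k : nat) (hk : (1 <= k)%N)
  (a b c d : R) (ha : 0 <= a) (hb : 0 <= b) (hc : 0 <= c) (hd : 0 <= d)
  (eta : R) (U U' V V' : nat -> R -> R)
  (hPS : PSseq k a b c d eta U U' V V') :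
  (exists C : R, forall n : nat,
      Num.sqrt (H1H1norm2 (U n) (U' n) (V n) (V' n)) <= C)
  /\ ((fun n : nat => H1H1norm2 (U n) (U' n) (V n) (V' n)) @ \oo
        --> (2 * k + 2)%N%:R / k%:R * eta)
  /\ ((fun n : nat => P_func k a b c d (U n) (V n)) @ \oo --> eta / k%:R)
  /\ 0 <= eta
  /\ (eta = 0 <->
       ((fun n : nat => Num.sqrt (H1norm2 (U n) (U' n))) @ \oo --> 0)
       /\ ((fun n : nat => Num.sqrt (H1norm2 (V n) (V' n))) @ \oo --> 0)).
Proof.
move: hPS => [H1UV [I_cvg [eps [eps_cvg0 dI_bound]]]].
pose N n := H1H1norm2 (U n) (U' n) (V n) (V' n).
pose P n := P_func k a b c d (U n) (V n).
have k_gt0 : 0 < k%:R :> R by rewrite ltr0n.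
have N_ge0 n : 0 <= N n by exact: H1H1norm2_ge0.
have defect n : `|N n - (2 * k%:R + 2) * P n| <= eps n * Num.sqrt (N n).
  have [HU HV] := H1UV n.
  have [[[mU _] [[mU' _] _]] [[mV _] [[mV' _] _]]] := (HU, HV).
  by have [_] := dI_bound n _ _ _ _ HU HV; rewrite derive1_I_func_ray.
rewrite natrD natrM.
split; first exact: Nehari_sqrt_bounded k_gt0 N_ge0 I_cvg eps_cvg0 defect.
split; first exact: Nehari_norm_cvg k_gt0 N_ge0 I_cvg eps_cvg0 defect.
split; first exact: Nehari_P_cvg k_gt0 N_ge0 I_cvg eps_cvg0 defect.
split; first exact: Nehari_level_ge0 k_gt0 N_ge0 I_cvg eps_cvg0 defect.
apply: (iff_trans (Nehari_level_eq0 k_gt0 N_ge0 I_cvg eps_cvg0 defect)).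
have -> : N = fun n => H1norm2 (U n) (U' n) + H1norm2 (V n) (V' n).
  by apply/funext => n; rewrite /N H1H1norm2_split //; case: (H1UV n).
exact: cvg0_sqrtD (fun n => H1norm2_ge0 _ _) (fun n => H1norm2_ge0 _ _).
Qed.
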